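(* For $a,b\in G$, the ideal $\{a^{-1}b^{-1}ab\}^\#$ of $\kappa G^\#$ equals the ideal generated by $\{[\vec a,\vec b]\cdot\vec c : \vec c\in\Lambda_G\}$.
   Context: Let $\kappa$ be a field of characteristic $0$ and $G$ a group. Let $*:\kappa G\to\kappa G$ be the $\kappa$-linear map with $g^*=g^{-1}$, $(\kappa G)^*$ its fixed points, and $A_G$ the quotient of $\kappa G$ by the two-sided ideal generated by all $ab-ba$, $a\in\kappa G$, $b\in(\kappa G)^*$; $*$ descends to $A_G$. $\kappa G^\#=\{x\in A_G:x^*=x\}$, $\Lambda_G=\{x\in A_G:x^*=-x\}$; group elements are identified with their images in $A_G$; $\bar x=\tfrac12(x+x^* )$, $\vec x=\tfrac12(x-x^* )$. For $\vec x,\vec y\in\Lambda_G$: $\vec x\cdot\vec y=-\tfrac12(\vec x\vec y+\vec y\vec x)$, $[\vec x,\vec y]=\tfrac12(\vec x\vec y-\vec y\vec x)$. For $L\subset G$, $L^\#$ is the ideal of $\kappa G^\#$ generated by $\{\overline{xl}-\bar x:x\in A_G,l\in L\}$. *)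

From HB Require Import structures.
From mathcomp Require Import all_boot all_order all_algebra.
Set Implicit Arguments. Unset Strict Implicit. Unset Printing Implicit Defensive.
Import GRing.Theory.
Local Open Scope ring_scope.

Definition ideal_gen (T : pzRingType) (P S : T -> Prop) (y : T) : Prop :=
  forall J : T -> Prop,
    (forall x, J x -> P x) ->
    J 0 ->
    (forall x z, J x -> J z -> J (x - z)) ->
    (forall r x, P r -> J x -> J (r * x) /\ J (x * r)) ->
    (forall x, S x -> J x) ->
    J y.

Section AG.
Variables (k : fieldType) (A : lalgType k) (starA : A -> A).

Definition half : k := (2%:R)^-1.
Definition bar (x : A) : A := half *: (x + starA x).
Definition vec (x : A) : A := half *: (x - starA x).
Definition vdot (x y : A) : A := - (half *: (x * y + y * x)).
Definition vbr (x y : A) : A := half *: (x * y - y * x).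

Definition kGsharp (y : A) : Prop := starA y = y.
Definition LambdaG (y : A) : Prop := starA y = - y.

(* generators of L^# for L ⊂ G, where emb : G -> A_G is the image of group
   elements:  { \bar{x l} - \bar x : x ∈ A_G, l ∈ L } *)
Definition Lsharp_gens (G : Type) (emb : G -> A) (L : G -> Prop) (y : A) : Prop :=
  exists (x : A) (l : G), L l /\ y = bar (x * emb l) - bar x.

Definition Lsharp (G : Type) (emb : G -> A) (L : G -> Prop) : A -> Prop :=
  ideal_gen kGsharp (Lsharp_gens emb L).

End AG.

(* In A_G every symmetric element is central, since u s - s u with s = s^*
   generates the ideal defining A_G.  Since x = \bar x + \vec x, ring
   commutators only see antisymmetric parts, so with m := ab - ba we get
   m = 2 [\vec a, \vec b] and m^* = -m.  A generator of {a^-1 b^-1 a b}^# is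
   \bar(x a^-1 b^-1 a b) - \bar x = \bar(z m) with z := x a^-1 b^-1, and for
   z = s + v (s symmetric, hence central) one computes
   \bar(z m) = (v m + m v)/2 = -[\vec a, \vec b] . (2 v).
   Conversely every c in Λ_G arises as 2 v for z := -c/2, i.e. x := -c/2 b a, so
   both ideals have the same generators up to sign. *)

From Pilot Require Import Defs.
From HB Require Import structures.
From mathcomp Require Import all_boot all_order all_algebra.
Import GRing.Theory.
Set Implicit Arguments. Unset Strict Implicit. Unset Printing Implicit Defensive.
Local Open Scope ring_scope.

Lemma ideal_gen_mem (T : pzRingType) (P S : T -> Prop) x :
  S x -> ideal_gen P S x.
Proof. by move=> Sx J _ _ _ _ /(_ x Sx). Qed.

Lemma ideal_genN (T : pzRingType) (P S : T -> Prop) x :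
  ideal_gen P S x -> ideal_gen P S (- x).
Proof.
move=> Ix J JP J0 JB JM JS; rewrite -sub0r.
exact: JB J0 (Ix J JP J0 JB JM JS).
Qed.

Lemma ideal_gen_sub (T : pzRingType) (P S S' : T -> Prop) y :
  (forall x, S x -> ideal_gen P S' x) -> ideal_gen P S y -> ideal_gen P S' y.
Proof.
move=> SS' Iy J JP J0 JB JM JS'; apply: Iy => // x /SS'.
exact: (fun Ix => Ix J JP J0 JB JM JS').
Qed.

Lemma ideal_gen_eq (T : pzRingType) (P S S' : T -> Prop) y :
  (forall x, S x -> ideal_gen P S' x) -> (forall x, S' x -> ideal_gen P S x) ->
  ideal_gen P S y <-> ideal_gen P S' y.
Proof. by move=> SS' S'S; split; apply: ideal_gen_sub. Qed.

Section SymmetricCentral.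
Variables (k : fieldType) (A : algType k) (st : A -> A).
Hypothesis two_neq0 : (2%:R : k) != 0.
Hypothesis st_lin : forall c x y, st (c *: x + y) = c *: st x + st y.
Hypothesis st_invol : involutive st.
Hypothesis st_antimul : forall x y, st (x * y) = st y * st x.
Hypothesis sym_central : forall s x, st s = s -> s * x = x * s.
HB.instance Definition _ := GRing.isLinear.Build k A A *:%R st st_lin.
Local Notation vdot := (@vdot k A).
Local Notation vbr := (@vbr k A).

Lemma half_mul2 : Defs.half k * 2%:R = 1.
Proof. exact: mulVf. Qed.

Lemma bar_add_vec x : bar st x + vec st x = x.
Proof.
rewrite /bar /vec -scalerDr addrACA subrr addr0 -mulr2n -scaler_nat.
by rewrite scalerA half_mul2 scale1r.
Qed.

Lemma st_bar x : st (bar st x) = bar st x.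
Proof. by rewrite /bar linearZ linearD /= st_invol addrC. Qed.

Lemma st_vec x : st (vec st x) = - vec st x.
Proof. by rewrite /vec linearZ linearB /= st_invol -scalerN opprB. Qed.

Lemma vec_antisym c : st c = - c -> vec st c = c.
Proof.
move=> stc; rewrite /vec stc opprK -mulr2n -scaler_nat.
by rewrite scalerA half_mul2 scale1r.
Qed.

Lemma barB x y : bar st (x - y) = bar st x - bar st y.
Proof. by rewrite /bar linearB /= -scalerBr opprD addrACA. Qed.

Lemma commutator_addl_sym s v y : st s = s ->
  (s + v) * y - y * (s + v) = v * y - y * v.
Proof.
by move=> sts; rewrite mulrDl mulrDr (sym_central _ sts) opprD addrACA subrr add0r.
Qed.

Lemma commutator_vec x y : x * y - y * x = vec st x * vec st y - vec st y * vec st x.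
Proof.
have := commutator_addl_sym (vec st x) y (st_bar x); rewrite bar_add_vec => ->.
apply: oppr_inj; rewrite !opprB.
by have := commutator_addl_sym (vec st y) (vec st x) (st_bar y); rewrite bar_add_vec => ->.
Qed.

Lemma st_commutator u v :
  st u = - u -> st v = - v -> st (u * v - v * u) = - (u * v - v * u).
Proof. by move=> stu stv; rewrite linearB /= !st_antimul stu stv !mulrNN opprB. Qed.

Lemma vdotNr x y : vdot x (- y) = - vdot x y.
Proof. by rewrite /vdot mulrN mulNr -opprD scalerN. Qed.

Lemma vdot_vbr_scale2 u v c :
  vdot (vbr u v) (2%:R *: c) = vdot (u * v - v * u) c.
Proof.
rewrite /vdot /vbr -scalerAl -scalerAr -!scalerAl -!scalerAr !scalerA.
by rewrite [2%:R * _]mulrC half_mul2 !scale1r.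
Qed.

(* The symmetric part of z commutes with m and cancels out. *)
Lemma bar_mul_antisym z m : st m = - m -> bar st (z * m) = - vdot m (vec st z).
Proof.
move=> stm; rewrite /vdot opprK /bar st_antimul stm.
have -> : st z = bar st z - vec st z.
  by rewrite -{1}(bar_add_vec z) linearD /= st_bar st_vec.
rewrite -{1}(bar_add_vec z) mulrDl mulNr mulrBr opprB (sym_central _ (st_bar z)).
by rewrite addrAC [m * _ + _]addrC subrK.
Qed.

Lemma bar_mul_group_commutator al be w x : w * (be * al) = 1 ->
  bar st (x * (w * (al * be))) - bar st x
    = - vdot (vbr (vec st al) (vec st be)) (2%:R *: vec st (x * w)).
Proof.
move=> wK; rewrite -barB.
have -> : x * (w * (al * be)) - x = (x * w) * (al * be - be * al).
  by rewrite mulrBr -!mulrA wK mulr1.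
rewrite commutator_vec bar_mul_antisym ?vdot_vbr_scale2 //.
by apply: st_commutator; apply: st_vec.
Qed.

Lemma Lsharp_commutator (G : Type) (emb : G -> A) l0 al be w y :
  w * (be * al) = 1 -> be * al * w = 1 -> emb l0 = w * (al * be) ->
  Lsharp st emb (fun l => l = l0) y <->
  ideal_gen (kGsharp st)
    (fun z => exists c : A, LambdaG st c /\ z = vdot (vbr (vec st al) (vec st be)) c) y.
Proof.
move=> wK Kw embl0; apply: ideal_gen_eq => z.
- case=> x [_ [-> ->]]; rewrite embl0 bar_mul_group_commutator //.
  apply: ideal_genN; apply: ideal_gen_mem; exists (2%:R *: vec st (x * w)); split=> //.
  by rewrite /LambdaG linearZ /= st_vec scalerN.
- case=> c [stc ->]; apply: ideal_gen_mem.
  exists (- (Defs.half k *: c) * (be * al)), l0; split=> //.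
  have st_c2 : st (- (Defs.half k *: c)) = - - (Defs.half k *: c).
    by rewrite linearN linearZ /= stc scalerN.
  rewrite embl0 bar_mul_group_commutator // -mulrA Kw mulr1 (vec_antisym st_c2).
  by rewrite scalerN scalerA [2%:R * _]mulrC half_mul2 scale1r vdotNr opprK.
Qed.

End SymmetricCentral.

Section GroupAlgebra.
Variables (k : fieldType) (G : Type) (gmul : G -> G -> G) (ginv : G -> G) (g1 : G).
Hypothesis ginvl : forall x, gmul (ginv x) x = g1.
Variables (R : algType k) (iota : G -> R).
Hypothesis iota_mul : forall x y, iota (gmul x y) = iota x * iota y.
Hypothesis iota_one : iota g1 = 1.
Hypothesis iota_span : forall r : R, exists (n : nat) (c : 'I_n -> k) (g : 'I_n -> G),
  r = \sum_(i < n) c i *: iota (g i).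
Variable star : R -> R.
Hypothesis star_lin : forall c x y, star (c *: x + y) = c *: star x + star y.
HB.instance Definition _ := GRing.isLinear.Build k R R *:%R star star_lin.
Hypothesis star_iota : forall g, star (iota g) = iota (ginv g).

Lemma iota_invl g : iota (ginv g) * iota g = 1.
Proof. by rewrite -iota_mul ginvl iota_one. Qed.

Lemma iota_invK g : iota (ginv (ginv g)) = iota g.
Proof. by rewrite -[LHS]mulr1 -(iota_invl g) mulrA iota_invl mul1r. Qed.

Lemma iota_invr g : iota g * iota (ginv g) = 1.
Proof. by rewrite -{1}iota_invK iota_invl. Qed.

Lemma iota_invM g h : iota (ginv (gmul g h)) = iota (ginv h) * iota (ginv g).
Proof.
have gh_inv : iota (gmul g h) * (iota (ginv h) * iota (ginv g)) = 1.
  by rewrite iota_mul -mulrA (mulrA (iota h)) iota_invr mul1r iota_invr.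
by rewrite -[LHS]mulr1 -gh_inv mulrA iota_invl mul1r.
Qed.

Lemma linear_eq_on_basis {W : lmodType k} (f h : {linear R -> W}) :
  (forall g, f (iota g) = h (iota g)) -> f =1 h.
Proof.
move=> fh r; have [n [c [g ->]]] := iota_span r.
by rewrite !linear_sum; apply: eq_bigr => i _; rewrite !linearZ fh.
Qed.

Lemma star_invol : involutive star.
Proof.
move=> r; apply: (linear_eq_on_basis (f := star \o star) (h := idfun) _ r) => g /=.
by rewrite !star_iota iota_invK.
Qed.

Lemma star_antimul x r : star (x * r) = star r * star x.
Proof.
have star_iotaM g q : star (iota g * q) = star q * iota (ginv g).
  apply: (linear_eq_on_basis (f := star \o (iota g \*o idfun))
                             (h := iota (ginv g) \o* star) _ q) => h /=.
  by rewrite -iota_mul !star_iota iota_invM.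
apply: (linear_eq_on_basis (f := star \o (r \o* idfun)) (h := star r \*o star) _ x) => g /=.
by rewrite star_iotaM star_iota.
Qed.

End GroupAlgebra.

Section Quotient.
Variables (k : fieldType) (R A : algType k) (pi : R -> A) (star : R -> R).
Hypothesis two_neq0 : (2%:R : k) != 0.
Hypothesis pi_lin : forall c x y, pi (c *: x + y) = c *: pi x + pi y.
HB.instance Definition _ := GRing.isLinear.Build k R A *:%R pi pi_lin.
Hypothesis pi_mul : forall x y, pi (x * y) = pi x * pi y.
Hypothesis pi_surj : forall y : A, exists x : R, pi x = y.
Hypothesis star_lin : forall c x y, star (c *: x + y) = c *: star x + star y.
HB.instance Definition _ := GRing.isLinear.Build k R R *:%R star star_lin.
Hypothesis star_invol : involutive star.
Hypothesis star_antimul : forall x y, star (x * y) = star y * star x.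
Hypothesis pi_commutator_sym : forall u v, star v = v -> pi (u * v - v * u) = 0.
Variable starA : A -> A.
Hypothesis starA_pi : forall x, starA (pi x) = pi (star x).

Lemma starA_lin c x y : starA (c *: x + y) = c *: starA x + starA y.
Proof.
have [[r <-] [q <-]] := (pi_surj x, pi_surj y).
by rewrite -pi_lin !starA_pi star_lin pi_lin.
Qed.

Lemma starA_invol : involutive starA.
Proof. by move=> x; have [r <-] := pi_surj x; rewrite !starA_pi star_invol. Qed.

Lemma starA_antimul x y : starA (x * y) = starA y * starA x.
Proof.
have [[r <-] [q <-]] := (pi_surj x, pi_surj y).
by rewrite -pi_mul !starA_pi star_antimul pi_mul.
Qed.

(* A symmetric class is the class of a symmetric element, namely the symmetric
   part of any representative. *)
Lemma starA_sym_central s x : starA s = s -> s * x = x * s.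
Proof.
have [[r <-] [q <-]] := (pi_surj s, pi_surj x); rewrite starA_pi => st_r.
have pi_bar : pi (bar star r) = pi r.
  by rewrite linearZ linearD /= st_r -mulr2n -scaler_nat scalerA mulVf ?scale1r.
have st_bar : star (bar star r) = bar star r.
  by rewrite linearZ linearD /= star_invol addrC.
apply/eqP; rewrite eq_sym -subr_eq0 -pi_bar -!pi_mul -linearB /=.
by rewrite pi_commutator_sym.
Qed.

End Quotient.

Theorem mainTheorem12
  (* κ : a field of characteristic 0 *)
  (k : fieldType) (hchar : [pchar k] =i pred0)
  (* G : a group (possibly infinite), with multiplication, inverse, unit *)
  (G : Type) (gmul : G -> G -> G) (ginv : G -> G) (g1 : G)
  (gassoc : forall x y z, gmul x (gmul y z) = gmul (gmul x y) z)
  (gid : forall x, gmul g1 x = x)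
  (ginvl : forall x, gmul (ginv x) x = g1)
  (* κG : a κ-algebra R with a group homomorphism iota : G -> R whose image
     is a κ-basis of R *)
  (R : algType k) (iota : G -> R)
  (iota_mul : forall x y, iota (gmul x y) = iota x * iota y)
  (iota_one : iota g1 = 1)
  (iota_free : forall (n : nat) (c : 'I_n -> k) (g : 'I_n -> G),
      injective g -> \sum_(i < n) c i *: iota (g i) = 0 -> forall i, c i = 0)
  (iota_span : forall r : R, exists (n : nat) (c : 'I_n -> k) (g : 'I_n -> G),
      r = \sum_(i < n) c i *: iota (g i))
  (* * : the κ-linear map on κG with g^* = g^{-1} *)
  (star : R -> R)
  (star_lin : forall (c : k) (x y : R), star (c *: x + y) = c *: star x + star y)
  (star_iota : forall g, star (iota g) = iota (ginv g))
  (* A_G : the quotient of κG by the two-sided ideal generated by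
     { a b - b a : a ∈ κG, b ∈ (κG)^* }, given by the surjective algebra
     morphism pi : κG -> A_G with exactly this kernel *)
  (A : algType k) (pi : R -> A)
  (pi_lin : forall (c : k) (x y : R), pi (c *: x + y) = c *: pi x + pi y)
  (pi_mul : forall x y, pi (x * y) = pi x * pi y)
  (pi_one : pi 1 = 1)
  (pi_surj : forall y : A, exists x : R, pi x = y)
  (pi_ker : forall x : R, pi x = 0 <->
      ideal_gen (fun _ => True)
        (fun z => exists u v : R, star v = v /\ z = u * v - v * u) x)
  (* the involution * descended to A_G *)
  (starA : A -> A) (starA_pi : forall x, starA (pi x) = pi (star x))
  (a b : G) :
  forall y : A,
    Lsharp starA (fun g => pi (iota g))
      (fun l => l = gmul (gmul (ginv a) (ginv b)) (gmul a b)) y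
    <->
    ideal_gen (kGsharp starA)
      (fun z => exists c : A, LambdaG starA c /\
         z = vdot (vbr (vec starA (pi (iota a))) (vec starA (pi (iota b)))) c) y.
Proof.
move=> y.
have two_neq0 : (2%:R : k) != 0.
  by apply/negP => /eqP two0; have := hchar 2; rewrite !inE two0 eqxx.
have pi_commutator_sym u v : star v = v -> pi (u * v - v * u) = 0.
  by move=> sv; apply/pi_ker => J _ _ _ _; apply; exists u, v.
have star_invol := star_invol ginvl iota_mul iota_one iota_span star_lin star_iota.
have star_antimul := star_antimul ginvl iota_mul iota_one iota_span star_lin star_iota.
have emb_invl g : pi (iota (ginv g)) * pi (iota g) = 1.
  by rewrite -pi_mul (iota_invl ginvl iota_mul iota_one) pi_one.
have emb_invr g : pi (iota g) * pi (iota (ginv g)) = 1.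
  by rewrite -pi_mul (iota_invr ginvl iota_mul iota_one) pi_one.
apply: (Lsharp_commutator two_neq0
  (starA_lin pi_lin pi_surj star_lin starA_pi)
  (starA_invol pi_surj star_invol starA_pi)
  (starA_antimul pi_mul pi_surj star_antimul starA_pi)
  (starA_sym_central two_neq0 pi_lin pi_mul pi_surj star_lin star_invol
     pi_commutator_sym starA_pi)
  (w := pi (iota (ginv a)) * pi (iota (ginv b)))).
- by rewrite -mulrA (mulrA (pi (iota (ginv b)))) emb_invl mul1r emb_invl.
- by rewrite -mulrA (mulrA (pi (iota a))) emb_invr mul1r emb_invr.
- by rewrite !iota_mul !pi_mul.
Qed.
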